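(* Let $k\ge 2$, let $G$ be a $K_k$-free graph on $n$ vertices containing an independent set $A$ of size $a$, and let $H$ be a complete multipartite graph. Then there is a complete $(k-1)$-partite graph $G'$ on $n$ vertices such that $\mathcal{N}(H,G)\le \mathcal{N}(H,G')$ and one of the parts of $G'$ has size at least $a$.
   Context: For graphs $H,G$, $\mathcal{N}(H,G)$ denotes the number of subgraphs of $G$ isomorphic to $H$. *)

From mathcomp Require Import all_boot.
Set Implicit Arguments. Unset Strict Implicit. Unset Printing Implicit Defensive.

Definition simple_graph (V : finType) (e : rel V) : Prop :=
  symmetric e /\ irreflexive e.

Definition Kfree (V : finType) (e : rel V) (k : nat) : Prop :=
  forall S : {set V}, #|S| = k ->
    ~ (forall x y, x \in S -> y \in S -> x != y -> e x y).

Definition independent (V : finType) (e : rel V) (A : {set V}) : Prop :=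
  forall x y, x \in A -> y \in A -> ~~ e x y.

(* Complete multipartite graph: vertices adjacent iff they lie in different
   parts of the partition given by [part]. *)
Definition cmp_rel (W : finType) (P : eqType) (part : W -> P) : rel W :=
  fun x y => part x != part y.

(* A subgraph of (V,eG) is a pair (S,F) of a vertex set S and a set F of
   (ordered, both orientations) edges of G with endpoints in S. *)
Definition is_copy (W V : finType) (eH : rel W) (eG : rel V)
    (p : {set V} * {set V * V}) : bool :=
  let (S, F) := p in
  (F \subset [set e : V * V | [&& eG e.1 e.2, e.1 \in S & e.2 \in S]]) &&
  [exists f : {ffun W -> V},
     [&& injectiveb f, f @: setT == S &
         [forall x, forall y, eH x y == ((f x, f y) \in F)]]].

Definition Ncount (W V : finType) (eH : rel W) (eG : rel V) : nat :=
  #|[set p : {set V} * {set V * V} | is_copy eH eG p]|.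

From mathcomp Require Import all_boot fingroup perm.
Set Implicit Arguments. Unset Strict Implicit. Unset Printing Implicit Defensive.

(* Zykov symmetrization.  Every copy of H in G is the image of exactly
   |Aut H| injective homomorphisms H -> G, so it suffices to compare numbers of
   injective homomorphisms.  Cloning an independent set I onto a vertex x
   (every vertex of I gets the neighbourhood of x outside I) keeps the graph
   K_k-free, and since H is complete multipartite, the number of homomorphisms
   into the clone is, on average over x in I, at least the number into G: the
   vertices of H sent into I all lie in one part of H, and rotating I
   cyclically maps I x Hom(H, G) injectively into the pairs (x, phi) with
   phi in Hom(H, clone_x G).
   Cloning A first makes A a set of twins.  Then, as long as two non-adjacent
   vertices are not twins, cloning the union of their twin classes does not
   decrease the number of homomorphisms and strictly increases the number of
   twin pairs.  In the final graph non-adjacency is the twin relation, so the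
   graph is complete multipartite with A inside one part, and it has at most
   k - 1 parts because it is K_k-free. *)

Section InjectiveHomomorphisms.
Variables (W V : finType) (eH : rel W).
Implicit Types (e : rel V) (f g : {ffun W -> V}) (s : {perm W}).

Definition injhom e : {set {ffun W -> V}} :=
  [set f : {ffun W -> V} |
     injectiveb f && [forall x, forall y, eH x y ==> e (f x) (f y)]].

Lemma injhomP e f :
  reflect (injective f /\ forall x y, eH x y -> e (f x) (f y)) (f \in injhom e).
Proof.
rewrite inE; apply: (iffP andP) => [[/injectiveP fi /forallP fe]|[fi fe]].
  by split=> // x y; move/forallP: (fe x) => /(_ y) /implyP.
split; first exact/injectiveP.
by apply/forallP => x; apply/forallP => y; apply/implyP/fe.
Qed.

Lemma eq_injhom (e1 e2 : rel V) : e1 =2 e2 -> injhom e1 = injhom e2.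
Proof.
move=> E; apply/setP => f.
by apply/injhomP/injhomP => -[fi fe]; split=> // x y /fe; rewrite E.
Qed.

Definition edge_image f : {set V * V} :=
  [set (f x, f y) | x in W, y in W & eH x y].

Definition copy_of f : {set V} * {set V * V} := (f @: setT, edge_image f).

Lemma edge_imageP f (q : V * V) :
  reflect (exists x y, eH x y /\ q = (f x, f y)) (q \in edge_image f).
Proof.
apply: (iffP imset2P) => [[x y _]|[x [y [exy ->]]]].
  by rewrite inE => exy ->; exists x, y.
by apply: (Imset2spec (x1 := x) (x2 := y)); rewrite ?inE.
Qed.

Lemma is_copyP e (p : {set V} * {set V * V}) :
  reflect (exists2 f, f \in injhom e & p = copy_of f) (is_copy eH e p).
Proof.
case: p => S F; apply: (iffP andP).
- case=> /subsetP FE /existsP [f /and3P [/injectiveP fi /eqP fS /forallP fF]].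
  have eHF x y : eH x y = ((f x, f y) \in F) by apply/eqP; move/forallP: (fF x).
  exists f.
    apply/injhomP; split=> // x y; rewrite eHF => /FE.
    by rewrite inE => /and3P [].
  rewrite /copy_of fS; congr pair; apply/setP => -[u v]; apply/idP/idP.
    move=> uvF; have := FE _ uvF; rewrite inE /= -fS.
    case/and3P=> _ /imsetP [x _ ux] /imsetP [y _ vy]; subst u v.
    by apply/edge_imageP; exists x, y; rewrite eHF.
  by case/edge_imageP=> x [y [exy ->]]; rewrite -eHF.
- case=> f /injhomP [fi fe] [-> ->]; split.
    apply/subsetP => _ /edge_imageP [x [y [exy ->]]].
    by rewrite inE /= fe // !imset_f.
  apply/existsP; exists f; rewrite eqxx; apply/and3P; split=> //.
    exact/injectiveP.
  apply/forallP => x; apply/forallP => y; apply/eqP; apply/idP/idP.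
    by move=> exy; apply/edge_imageP; exists x, y.
  by case/edge_imageP=> x' [y' [exy [/fi -> /fi ->]]].
Qed.

Definition auts : {set {perm W}} :=
  [set s : {perm W} | [forall x, forall y, eH (s x) (s y) == eH x y]].

Lemma autsP s : reflect (forall x y, eH (s x) (s y) = eH x y) (s \in auts).
Proof.
rewrite inE; apply: (iffP forallP) => [es x y|es x].
  by apply/eqP; move/forallP: (es x).
by apply/forallP => y; rewrite es.
Qed.

Lemma auts_gt0 : 0 < #|auts|.
Proof. by apply/card_gt0P; exists 1%g; apply/autsP => x y; rewrite !perm1. Qed.

Definition precomp f s : {ffun W -> V} :=
  [ffun x => f (s x)].

Lemma precomp_injhom e f s :
  f \in injhom e -> s \in auts -> precomp f s \in injhom e.
Proof.
move=> /injhomP [fi fe] /autsP es; apply/injhomP; split.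
  by move=> x y; rewrite !ffunE => /fi /perm_inj.
by move=> x y exy; rewrite !ffunE fe ?es.
Qed.

Lemma copy_of_precomp f s : s \in auts -> copy_of (precomp f s) = copy_of f.
Proof.
move=> /autsP es; congr pair.
  apply/setP => v; apply/imsetP/imsetP => -[x _ ->].
    by exists (s x); rewrite ?ffunE.
  by exists ((s^-1)%g x); rewrite ?ffunE ?permKV.
apply/setP => q; apply/edge_imageP/edge_imageP => -[x [y [exy ->]]].
  by exists (s x), (s y); rewrite !ffunE es.
by exists ((s^-1)%g x), ((s^-1)%g y); rewrite !ffunE !permKV -es !permKV.
Qed.

Lemma eq_copy_of_precomp f g : injective f -> injective g ->
  copy_of f = copy_of g -> exists2 s, s \in auts & f = precomp g s.
Proof.
move=> fi gi [fS fE].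
have f_im x : exists y, g y == f x.
  have : f x \in f @: setT by rewrite imset_f.
  by rewrite fS => /imsetP [y _ ->]; exists y.
pose s0 x := xchoose (f_im x).
have s0E x : g (s0 x) = f x by apply/eqP/(xchooseP (f_im x)).
have s0_inj : injective s0 by move=> x y /(congr1 g); rewrite !s0E => /fi.
exists (perm s0_inj); last by apply/ffunP => x; rewrite ffunE permE s0E.
apply/autsP => x y; rewrite !permE; apply/idP/idP => exy.
  have : (f x, f y) \in edge_image f.
    by rewrite fE -!s0E; apply/edge_imageP; exists (s0 x), (s0 y).
  by case/edge_imageP=> x' [y' [exy' [/fi -> /fi ->]]].
have : (f x, f y) \in edge_image g by rewrite -fE; apply/edge_imageP; exists x, y.
by rewrite -!s0E => /edge_imageP [x' [y' [exy' [/gi -> /gi ->]]]].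
Qed.

Lemma card_copy_fiber e g : g \in injhom e ->
  #|[set f in injhom e | copy_of f == copy_of g]| = #|auts|.
Proof.
move=> ge; have [gi _] := injhomP _ _ ge.
have -> : [set f in injhom e | copy_of f == copy_of g] = precomp g @: auts.
  apply/setP => f; rewrite inE; apply/andP/imsetP => [[fe /eqP fg]|[s sA ->]].
    have [fi _] := injhomP _ _ fe.
    by have [s] := eq_copy_of_precomp fi gi fg; exists s.
  by rewrite precomp_injhom // copy_of_precomp.
apply: card_in_imset => s1 s2 _ _ /ffunP s12; apply/permP => x.
by apply: gi; have := s12 x; rewrite !ffunE.
Qed.

Lemma Ncount_mul_auts e : Ncount eH e * #|auts| = #|injhom e|.
Proof.
rewrite /Ncount -[#|injhom e|]sum1_card.
rewrite (partition_big copy_of [in [set p | is_copy eH e p]]).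
  rewrite -sum_nat_const; apply: eq_bigr => p; rewrite inE => /is_copyP [g ge ->].
  by rewrite sum1_card -(card_copy_fiber ge); apply: eq_card => f; rewrite inE.
by move=> f fe; rewrite inE; apply/is_copyP; exists f.
Qed.

Lemma leq_Ncount (e1 e2 : rel V) :
  #|injhom e1| <= #|injhom e2| -> Ncount eH e1 <= Ncount eH e2.
Proof. by move=> le12; rewrite -(leq_pmul2r auts_gt0) !Ncount_mul_auts. Qed.

End InjectiveHomomorphisms.

Section Rotation.
Variables (V : finType) (I : {set V}) (x0 : V).

(* [x0] is only a default value for [nth]. *)
Definition rotate (t : nat) (v : V) : V :=
  if v \in I then nth x0 (enum I) ((index v (enum I) + t) %% #|I|) else v.

Lemma rotate_out t v : v \notin I -> rotate t v = v.
Proof. by rewrite /rotate => /negbTE ->. Qed.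

Lemma mod_card_lt_size v j : v \in I -> j %% #|I| < size (enum I).
Proof. by move=> vI; rewrite -cardE ltn_pmod //; apply/card_gt0P; exists v. Qed.

Lemma mem_rotate t v : (rotate t v \in I) = (v \in I).
Proof.
have [vI|vI] := boolP (v \in I); last by rewrite rotate_out // (negbTE vI).
by rewrite /rotate vI -mem_enum mem_nth // (mod_card_lt_size _ vI).
Qed.

Lemma index_rotate t v : v \in I ->
  index (rotate t v) (enum I) = (index v (enum I) + t) %% #|I|.
Proof.
by move=> vI; rewrite /rotate vI index_uniq ?enum_uniq ?(mod_card_lt_size _ vI).
Qed.

Lemma rotateD t1 t2 v : rotate t1 (rotate t2 v) = rotate (t2 + t1) v.
Proof.
have [vI|vI] := boolP (v \in I); last by rewrite !rotate_out.
by rewrite {1}/rotate mem_rotate vI index_rotate // /rotate vI modnDml addnA.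
Qed.

Lemma rotate_card v : rotate #|I| v = v.
Proof.
have [vI|vI] := boolP (v \in I); last by rewrite rotate_out.
rewrite /rotate vI modnDr modn_small ?nth_index ?mem_enum //.
by rewrite cardE index_mem mem_enum.
Qed.

Lemma rotateK t : t <= #|I| -> cancel (rotate t) (rotate (#|I| - t)).
Proof. by move=> le_t v; rewrite rotateD subnKC // rotate_card. Qed.

Lemma rotateKV t : t <= #|I| -> cancel (rotate (#|I| - t)) (rotate t).
Proof. by move=> le_t v; rewrite rotateD subnK // rotate_card. Qed.

Lemma rotate_inj_time v t1 t2 : v \in I -> t1 < #|I| -> t2 < #|I| ->
  rotate t1 v = rotate t2 v -> t1 = t2.
Proof.
move=> vI lt1 lt2 /(congr1 (index^~ (enum I))); rewrite !index_rotate //.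
by move/eqP; rewrite eqn_modDl !modn_small // => /eqP.
Qed.

End Rotation.

Lemma Kfree_hom (V U : finType) (e : rel V) (e' : rel U) (k : nat) (phi : U -> V) :
  irreflexive e -> (forall u v, e' u v -> e (phi u) (phi v)) ->
  Kfree e k -> Kfree e' k.
Proof.
move=> irr hom Kf S cardS clique.
have phi_inj : {in S &, injective phi}.
  move=> u v uS vS; apply: contra_eq => neq.
  by apply: contraTneq (hom _ _ (clique _ _ uS vS neq)) => ->; rewrite irr.
apply: (Kf (phi @: S)); first by rewrite card_in_imset.
move=> _ _ /imsetP [u uS ->] /imsetP [v vS ->] neq.
by apply/hom/clique => //; apply: contraNneq neq => ->.
Qed.

Lemma Kfree_clique_lt (V : finType) (e : rel V) (k : nat) (S : {set V}) :
  Kfree e k -> {in S &, forall x y, x != y -> e x y} -> #|S| < k.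
Proof.
move=> Kf clique; rewrite ltnNge; apply/negP => le_k.
have := le_k; rewrite -bin_gt0 -cards_draws => /card_gt0P [T].
rewrite inE => /andP [/subsetP TS /eqP cardT].
by apply: (Kf T cardT) => x y xT yT; apply: clique; apply: TS.
Qed.

Section Cloning.
Variable V : finType.
Implicit Types (e g : rel V) (I J : {set V}).

Definition clone e I (x : V) : rel V := fun u v =>
  if u \in I then (v \notin I) && e x v else if v \in I then e u x else e u v.

Lemma clone_sym e I x : symmetric e -> symmetric (clone e I x).
Proof.
move=> sym u v; rewrite /clone.
by case: (u \in I); case: (v \in I); rewrite //= sym.
Qed.

Lemma clone_irr e I x : irreflexive e -> irreflexive (clone e I x).
Proof. by move=> irr u; rewrite /clone; case: ifP => //= ->. Qed.

Lemma clone_Kfree e I x k : irreflexive e -> Kfree e k -> Kfree (clone e I x) k.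
Proof.
move=> irr; apply: (Kfree_hom (phi := fun v => if v \in I then x else v)) => // u v.
by rewrite /clone; case: (u \in I); case: (v \in I) => //= /andP [].
Qed.

Lemma clone_independent e I J x : independent e J ->
  {in J &, forall a b, (a \in I) = (b \in I)} -> independent (clone e I x) J.
Proof.
move=> indJ JI a b aJ bJ; rewrite /clone (JI a b aJ bJ).
by case: ifP => [->|->]; last exact: indJ.
Qed.

Definition twin g a b := [forall z, g a z == g b z].

Lemma twinP g a b : reflect (forall z, g a z = g b z) (twin g a b).
Proof. by apply: (iffP forallP) => H z; apply/eqP. Qed.

Lemma twin_refl g : reflexive (twin g).
Proof. by move=> a; apply/twinP. Qed.

Lemma twin_classE g a b : twin g a b -> twin g a =1 twin g b.
Proof. by move=> /twinP ab c; apply/twinP/twinP => ac z; rewrite -ac ab. Qed.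

Lemma twin_clone e I x a b :
  twin e a b -> (a \in I) = (b \in I) -> twin (clone e I x) a b.
Proof.
move=> /twinP ab abI; apply/twinP => z; rewrite /clone abI.
by case: ifP => // _; rewrite !ab.
Qed.

Lemma twin_clone_in e I x a b : a \in I -> b \in I -> twin (clone e I x) a b.
Proof. by move=> aI bI; apply/twinP => z; rewrite /clone aI bI. Qed.

Lemma clone_perm e I x (pi : V -> V) :
  (forall u, (pi u \in I) = (u \in I)) -> (forall u, u \notin I -> pi u = u) ->
  forall u v, clone e I x (pi u) (pi v) = clone e I x u v.
Proof.
move=> piI pi_out u v; rewrite /clone !piI.
have [uI|uI] := boolP (u \in I); have [vI|vI] := boolP (v \in I) => //=.
- by rewrite pi_out.
- by rewrite pi_out.
- by rewrite !pi_out.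
Qed.

End Cloning.

Section CloningMultipartite.
Variables (W Pt V : finType) (partH : W -> Pt).
Local Notation homs := (injhom (cmp_rel partH)).
Implicit Types (e : rel V) (I : {set V}) (f : {ffun W -> V}).

Lemma injhom_clone e I y f : independent e I -> y \in I -> f \in homs e ->
  (forall w, f w \in I -> y \in codom f) -> f \in homs (clone e I y).
Proof.
move=> indI yI /injhomP [fi fe] fy; apply/injhomP; split=> // w w' ww'.
have same_part w1 w2 : f w1 \in I -> f w2 \in I -> partH w1 = partH w2.
  by move=> w1I w2I; apply/eqP; apply: contraNT (indI _ _ w1I w2I) => /fe.
have part_y w1 : f w1 \in I -> exists2 w0, f w0 = y & partH w0 = partH w1.
  move=> w1I; have /codomP [w0 y_w0] := fy _ w1I.
  by exists w0 => //; apply: same_part; rewrite // -y_w0.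
rewrite /clone; case: ifP => [wI|_].
  have -> /= : f w' \notin I by apply: contraTN (fe _ _ ww') => w'I; exact: indI.
  have [w0 <- pw0] := part_y _ wI; apply: fe; by rewrite /cmp_rel pw0.
case: ifP => [w'I|_]; last exact: fe.
have [w0 <- pw0] := part_y _ w'I; apply: fe; by rewrite /cmp_rel pw0.
Qed.

Definition rotate_ffun I (x0 : V) (t : nat) f : {ffun W -> V} :=
  [ffun w => rotate I x0 t (f w)].

Lemma rotate_ffun_injhom e I x0 y t f : t <= #|I| ->
  f \in homs (clone e I y) -> rotate_ffun I x0 t f \in homs (clone e I y).
Proof.
move=> le_t /injhomP [fi fe]; apply/injhomP; split.
  by move=> w w'; rewrite !ffunE => /(can_inj (rotateK x0 le_t)) /fi.
move=> w w' ww'; rewrite !ffunE clone_perm; first exact: fe.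
  exact: mem_rotate.
exact: rotate_out.
Qed.

Section CloneAverage.
Variables (e : rel V) (I : {set V}) (x0 : V).
Hypotheses (x0I : x0 \in I) (indI : independent e I).

Definition hit_vertex f : V := odflt x0 [pick v in I | v \in codom f].

Lemma hit_vertex_in f : hit_vertex f \in I.
Proof. by rewrite /hit_vertex; case: pickP => [v /andP []|]. Qed.

Lemma hit_vertex_codom f w : f w \in I -> hit_vertex f \in codom f.
Proof.
rewrite /hit_vertex; case: pickP => [v /andP [] //|none fwI].
by have := none (f w); rewrite fwI codom_f.
Qed.

(* Rotations act regularly on [I], so the first component determines [t].  It
   lies in the image of [f] whenever [f] meets [I], and clones are invariant
   under permutations of [I], so the second component is in
   [homs (clone e I _)]. *)
Definition rotation_pair (tf : 'I_#|I| * {ffun W -> V}) : V * {ffun W -> V} :=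
  let g := rotate_ffun I x0 tf.1 tf.2 in (rotate I x0 (#|I| - tf.1) (hit_vertex g), g).

Lemma rotation_pair_inj : injective rotation_pair.
Proof.
have le_card (t : 'I_#|I|) : t <= #|I| := ltnW (ltn_ord t).
move=> [t1 f1] [t2 f2] [] /=; set g := rotate_ffun _ _ t2 f2 => + eg.
rewrite eg => eC; have t12 : t1 = t2.
  apply/val_inj/(@rotate_inj_time _ I x0 (rotate I x0 (#|I| - t1) (hit_vertex g)));
    rewrite ?mem_rotate ?hit_vertex_in ?ltn_ord //.
  by rewrite {2}eC !rotateKV ?le_card.
subst t2; congr pair; apply/ffunP => w.
by move/ffunP/(_ w): eg; rewrite !ffunE => /(can_inj (rotateK x0 (le_card t1))).
Qed.

Lemma rotation_pair_injhom t f : f \in homs e ->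
  let: (y, g) := rotation_pair (t, f) in (y \in I) && (g \in homs (clone e I y)).
Proof.
move=> fe /=; rewrite mem_rotate hit_vertex_in /=.
apply: rotate_ffun_injhom; first exact/ltnW/ltn_ord.
apply: injhom_clone; rewrite ?mem_rotate ?hit_vertex_in // => w fwI.
set g := rotate_ffun _ _ _ _; have /codomP [w1 ->] : hit_vertex g \in codom g.
  by apply: (hit_vertex_codom (w := w)); rewrite ffunE mem_rotate.
by rewrite ffunE rotateK ?codom_f // ltnW.
Qed.

Lemma clone_average_from :
  #|I| * #|homs e| <= \sum_(x in I) #|homs (clone e I x)|.
Proof.
rewrite -[X in X * _]card_ord -cardsT -cardsX.
rewrite (eq_bigr _ (fun x _ => esym (sum1_card _))) pair_big_dep sum1dep_card.
rewrite -(card_imset _ rotation_pair_inj); apply/subset_leq_card/subsetP.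
move=> _ /imsetP [[t f] /setXP [_ fe] ->]; rewrite inE.
by have := rotation_pair_injhom t fe; case: rotation_pair.
Qed.

End CloneAverage.

Lemma clone_average e I : independent e I ->
  #|I| * #|homs e| <= \sum_(x in I) #|homs (clone e I x)|.
Proof.
move=> indI; have [->|[x0 x0I]] := set_0Vmem I; first by rewrite cards0.
exact: clone_average_from x0I indI.
Qed.

Lemma exists_clone_injhom e I : independent e I -> I != set0 ->
  exists2 x, x \in I & #|homs e| <= #|homs (clone e I x)|.
Proof.
move=> indI /set0Pn [x0 x0I].
have [x /andP [xI le]|none] := pickP [pred x in I | #|homs e| <= #|homs (clone e I x)|].
  by exists x.
have lt_sum : \sum_(x in I) (#|homs (clone e I x)| + 1) <= #|I| * #|homs e|.
  rewrite -sum_nat_const; apply: leq_sum => x xI.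
  by rewrite addn1 ltnNge; have := none x; rewrite /= xI /= => ->.
have := leq_trans lt_sum (clone_average indI).
rewrite big_split /= sum1_card -[X in _ <= X]addn0 leq_add2l leqn0 => /eqP /card0_eq.
by move/(_ x0); rewrite x0I.
Qed.

End CloningMultipartite.

Section Symmetrization.
Variables (W Pt V : finType) (partH : W -> Pt) (k : nat) (A : {set V}).
Local Notation homs := (injhom (cmp_rel partH)).
Implicit Types (e g : rel V) (I : {set V}).

Definition admissible g : Prop := [/\ symmetric g, irreflexive g, Kfree g k,
  independent g A & {in A &, forall a b, twin g a b}].

Lemma admissible_clone g I x : admissible g -> independent g I ->
  {in A &, forall a b, (a \in I) = (b \in I)} -> admissible (clone g I x).
Proof.
case=> sym irr Kf indA twA indI AI; split.
- exact: clone_sym.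
- exact: clone_irr.
- exact: clone_Kfree.
- exact: clone_independent.
by move=> a b aA bA; apply: twin_clone; [apply: twA | apply: AI].
Qed.

Lemma exists_admissible e : symmetric e -> irreflexive e -> Kfree e k ->
  independent e A -> exists2 g, admissible g & #|homs e| <= #|homs g|.
Proof.
move=> sym irr Kf indA; have [A0|A_ne0] := eqVneq A set0.
  by exists e => //; split=> //; rewrite A0 => a b; rewrite inE.
have [x _ le] := exists_clone_injhom partH indA A_ne0.
exists (clone e A x) => //; split.
- exact: clone_sym.
- exact: clone_irr.
- exact: clone_Kfree.
- by apply: clone_independent => // a b -> ->.
exact: twin_clone_in.
Qed.

Definition twin_pairs g := [set p : V * V | twin g p.1 p.2].

Lemma twin_pairs_clone g I x : (forall a b, twin g a b -> (a \in I) = (b \in I)) ->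
  twin_pairs g \subset twin_pairs (clone g I x).
Proof.
move=> I_closed; apply/subsetP => -[a b]; rewrite !inE /= => ab.
exact: twin_clone ab (I_closed _ _ ab).
Qed.

Lemma symmetrization_step g u v : admissible g -> ~~ g u v -> ~~ twin g u v ->
  exists g', [/\ admissible g', #|homs g| <= #|homs g'|
                 & #|twin_pairs g| < #|twin_pairs g'|].
Proof.
move=> admg nuv ntw; have [sym irr _ _ twA] := admg.
(* A union of twin classes: cloning it keeps every twin pair (so [A] stays a
   set of twins) and makes [u] and [v] twins. *)
pose I := [set z | twin g z u || twin g z v].
have uI : u \in I by rewrite inE twin_refl.
have I_closed a b : twin g a b -> (a \in I) = (b \in I).
  by move=> ab; rewrite !inE !(twin_classE ab).
have nadj a : a \in I -> ~~ g a u && ~~ g a v.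
  by rewrite inE => /orP [] /twinP tw; rewrite !tw ?irr ?nuv // sym ?irr nuv.
have indI : independent g I.
  move=> a b aI; have /andP [nau nav] := nadj a aI.
  by rewrite inE sym => /orP [] /twinP ->; rewrite sym.
have AI : {in A &, forall a b, (a \in I) = (b \in I)}.
  by move=> a b aA bA; apply/I_closed/twA.
have I_ne0 : I != set0 by apply/set0Pn; exists u.
have [x _ le] := exists_clone_injhom partH indI I_ne0.
exists (clone g I x); split=> //; first exact: admissible_clone.
apply/proper_card/properP; split; first exact: twin_pairs_clone.
exists (u, v); rewrite !inE //= twin_clone_in //.
by rewrite inE twin_refl orbT.
Qed.

Lemma symmetrization g : admissible g -> exists2 G, admissible G &
  #|homs g| <= #|homs G| /\ forall u v, ~~ G u v -> twin G u v.
Proof.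
have [n] := ubnP (#|{: V * V}| - #|twin_pairs g|); elim: n g => // n IH g.
rewrite ltnS => bound admg.
case: (pickP [pred p : V * V | ~~ g p.1 p.2 && ~~ twin g p.1 p.2]) => [[u v]|none].
  case/andP=> nuv ntw; have [g' [admg' le lt]] := symmetrization_step admg nuv ntw.
  have [|G admG [leG twG]] := IH g' _ admg'.
    by apply: leq_trans bound; rewrite ltn_sub2l // (leq_trans lt) ?max_card.
  by exists G => //; split=> //; apply: leq_trans le leG.
exists g => //; split=> // u v nuv.
by have := none (u, v); rewrite /= nuv => /negbFE.
Qed.

End Symmetrization.

Lemma twin_closed_canonical (V : finType) (G : rel V) :
  symmetric G -> irreflexive G -> (forall u v, ~~ G u v -> twin G u v) ->
  exists2 rep : V -> V, forall v, rep (rep v) = rep v & G =2 cmp_rel rep.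
Proof.
move=> sym irr twG; pose rep v := odflt v [pick u | ~~ G v u].
have rep_nadj v : ~~ G v (rep v) by rewrite /rep; case: pickP => //= _; rewrite irr.
have G_rep : G =2 cmp_rel rep.
  move=> u v; apply/idP/idP => [Guv|].
    apply: contraTneq Guv => ruv; move/twinP: (twG _ _ (rep_nadj u)) => ->.
    by rewrite sym ruv.
  apply: contraR => /twG/twinP uv; apply/eqP.
  rewrite /rep (eq_pick (Q := [pred z | ~~ G v z])) => [|z]; last by rewrite /= uv.
  by case: pickP => [//|none]; have := none v; rewrite /= irr.
by exists rep => // v; have := rep_nadj v; rewrite G_rep /cmp_rel negbK => /eqP/esym.
Qed.

Lemma cmp_rel_relabel (V T : finType) (q : V -> T) (k : nat) :
  #|[set q v | v in V]| <= k -> exists p : V -> 'I_k, cmp_rel q =2 cmp_rel p.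
Proof.
move=> le_k; pose R := [set q v | v in V].
have idx_lt v : index (q v) (enum R) < k.
  by apply: leq_trans le_k; rewrite cardE index_mem mem_enum imset_f.
exists (fun v => Ordinal (idx_lt v)) => u v; rewrite /cmp_rel -val_eqE /=.
congr negb; apply/eqP/eqP => [->|] //.
by apply: (index_inj (q u)); rewrite mem_enum imset_f.
Qed.

Lemma twin_closed_cmp (V : finType) (G : rel V) (k : nat) :
  symmetric G -> irreflexive G -> Kfree G k ->
  (forall u v, ~~ G u v -> twin G u v) -> exists p : V -> 'I_k.-1, G =2 cmp_rel p.
Proof.
move=> sym irr Kf twG; have [rep rep_idem G_rep] := twin_closed_canonical sym irr twG.
have clique : {in [set rep v | v in V] &, forall x y, x != y -> G x y}.
  by move=> _ _ /imsetP [u _ ->] /imsetP [v _ ->]; rewrite G_rep /cmp_rel !rep_idem.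
have [|p rep_p] := cmp_rel_relabel (q := rep) (k := k.-1).
  by have ltk := Kfree_clique_lt Kf clique; rewrite -ltnS (ltn_predK ltk).
by exists p => u v; rewrite G_rep rep_p.
Qed.

Theorem proposition4p4 (k n a : nat) (V : finType) (eG : rel V)
    (W : finType) (Pt : finType) (partH : W -> Pt) (A : {set V}) :
  2 <= k ->
  simple_graph eG ->
  #|V| = n ->
  Kfree eG k ->
  independent eG A -> #|A| = a ->
  exists p : V -> 'I_(k.-1),
    Ncount (cmp_rel partH) eG <= Ncount (cmp_rel partH) (cmp_rel p) /\
    exists i : 'I_(k.-1), a <= #|[set v | p v == i]|.
Proof.
move=> k2 [sym irr] _ Kf indA <-.
have [g adm_g le_g] := exists_admissible partH sym irr Kf indA.
have [G [symG irrG KfG indAG _] [le_G twG]] := symmetrization partH adm_g.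
have [p Gp] := twin_closed_cmp symG irrG KfG twG.
exists p; split.
  by apply/leq_Ncount; rewrite -(eq_injhom _ Gp) (leq_trans le_g le_G).
have [A0|[x0 x0A]] := set_0Vmem A.
  have k1_gt0 : 0 < k.-1 by rewrite ltn_predRL.
  by exists (Ordinal k1_gt0); rewrite A0 cards0.
exists (p x0); apply/subset_leq_card/subsetP => y yA.
by rewrite inE; have := indAG _ _ yA x0A; rewrite Gp negbK.
Qed.
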